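(* Let $G=(V,E)$ be a directed graph, $T=\{t_1,\dots,t_{n_T}\}$ a finite task set, and for each $t_j\in T$ let $W^j=\{w^j_{uv}\in[0,1]:(u,v)\in E\}$. Let $\mathcal{L}:V\to\{a_1,\dots,a_{n_A}\}$ be a location map and $q_j^k\ge 0$ completion qualities for each task $t_j$ and sub-area $a_k$. Let $V_R\subseteq V$ and for each $v_i\in V_R$ let $T_i\subseteq T$. Then the multi-task diffusion function $f:2^{V_R}\to\mathbb{R}_{\ge 0}$ defined in the context is monotone and submodular, i.e. for all $S_1\subseteq S_2\subseteq V_R$ and $u\in V_R\setminus S_2$: $f(S_1)\le f(S_2)$ and $f(S_1\cup\{u\})-f(S_1)\ge f(S_2\cup\{u\})-f(S_2)$.
   Context: For a task $t_j$, a realization $g$ of $W^j$ is a random spanning subgraph $(V,E_g)$ of $G$ in which each edge $(u,v)\in E$ is included independently with probability $w^j_{uv}$; $\Pr[g;W^j]=\prod_{e\in E_g}w^j_e\prod_{e\in E\setminus E_g}(1-w^j_e)$. For $A\subseteq V$, $I_g(A)$ is the set of nodes reachable from a node of $A$ by a directed path in $g$ (including $A$). For $S\subseteq V_R$, $S^j=\{v_i\in S: t_j\in T_i\}$. The multi-task diffusion function is $f(S)=\frac{1}{n_T}\sum_{t_j\in T}\sum_{g}\Pr[g;W^j]\sum_{v\in I_g(S^j)}q_j^{\mathcal{L}(v)}$. *)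

From mathcomp Require Import all_boot all_order all_algebra.
Set Implicit Arguments. Unset Strict Implicit. Unset Printing Implicit Defensive.
Import Order.TTheory GRing.Theory Num.Theory.
Local Open Scope ring_scope.

Section MultiTask.
Variables (R : realFieldType) (V : finType) (E : {set V * V}).

Definition realization_prob (w : V -> V -> R) (g : {set V * V}) : R :=
  \prod_(e in E) (if e \in g then w e.1 e.2 else 1 - w e.1 e.2).

Definition reach_set (g : {set V * V}) (A : {set V}) : {set V} :=
  [set v | [exists a in A, connect (fun x y => (x, y) \in g) a v]].

Definition mt_diffusion (nT nA : nat) (w : 'I_nT -> V -> V -> R)
  (L : V -> 'I_nA) (q : 'I_nT -> 'I_nA -> R) (Ti : V -> {set 'I_nT})
  (S : {set V}) : R :=
  (nT%:R)^-1 * \sum_(j < nT) \sum_(g : {set V * V} | g \subset E)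
     realization_prob (w j) g *
     \sum_(v in reach_set g [set x in S | j \in Ti x]) q j (L v).
End MultiTask.

From mathcomp Require Import all_boot all_order all_algebra.
Set Implicit Arguments. Unset Strict Implicit. Unset Printing Implicit Defensive.
Import Order.TTheory GRing.Theory Num.Theory.
Local Open Scope ring_scope.

(* Restricting seeds to a task and taking reachable sets both commute
   with unions, so each summand is a coverage function, hence monotone and
   submodular; the diffusion function is a nonnegative combination of them. *)

Section SetFunctions.
Variables (R : realFieldType) (T : finType).
Implicit Types (f : {set T} -> R) (A B C : {set T}).

Definition set_monotone f := forall A B, A \subset B -> f A <= f B.

Definition set_submodular f :=
  forall A B C, A \subset B -> f (C :|: B) - f B <= f (C :|: A) - f A.

Lemma set_monotone_scale (a : R) f :
  0 <= a -> set_monotone f -> set_monotone (fun A => a * f A).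
Proof. by move=> a_ge0 f_mono A B AB; rewrite ler_wpM2l // f_mono. Qed.

Lemma set_submodular_scale (a : R) f :
  0 <= a -> set_submodular f -> set_submodular (fun A => a * f A).
Proof. by move=> a_ge0 f_sub A B C AB; rewrite -!mulrBr ler_wpM2l // f_sub. Qed.

Lemma set_monotone_sum (I : finType) (P : pred I) (F : I -> {set T} -> R) :
  (forall i, set_monotone (F i)) -> set_monotone (fun A => \sum_(i | P i) F i A).
Proof. by move=> F_mono A B AB; apply: ler_sum => i _; apply: F_mono. Qed.

Lemma set_submodular_sum (I : finType) (P : pred I) (F : I -> {set T} -> R) :
  (forall i, set_submodular (F i)) ->
  set_submodular (fun A => \sum_(i | P i) F i A).
Proof.
by move=> F_sub A B C AB; rewrite -!sumrB; apply: ler_sum => i _; apply: F_sub.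
Qed.

Definition weight (c : T -> R) A := \sum_(v in A) c v.

Variable c : T -> R.
Hypothesis c_ge0 : forall v, 0 <= c v.

Lemma weight_setD A B : A \subset B -> weight c B = weight c A + weight c (B :\: A).
Proof. by move=> AB; rewrite /weight (big_setID A) (setIidPr AB). Qed.

Lemma weight_monotone : set_monotone (weight c).
Proof.
by move=> A B AB; rewrite (weight_setD AB) lerDl; apply: sumr_ge0 => v _.
Qed.

Lemma weight_submodular : set_submodular (weight c).
Proof.
move=> A B C AB.
rewrite (weight_setD (subsetUr C B)) (weight_setD (subsetUr C A)).
rewrite [weight c B + _]addrC [weight c A + _]addrC !addrK.
by apply: weight_monotone; rewrite !setDUl !setDv !setU0 setDS.
Qed.

End SetFunctions.

Section UnionMorphisms.
Variables (R : realFieldType) (T T' : finType) (phi : {set T} -> {set T'}).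
Hypothesis phiU : {morph phi : A B / A :|: B}.

Lemma morph_setU_subset (A B : {set T}) : A \subset B -> phi A \subset phi B.
Proof. by move/setUidPr=> <-; rewrite phiU subsetUl. Qed.

Lemma set_monotone_comp (f : {set T'} -> R) :
  set_monotone f -> set_monotone (f \o phi).
Proof. by move=> f_mono A B /morph_setU_subset; apply: f_mono. Qed.

Lemma set_submodular_comp (f : {set T'} -> R) :
  set_submodular f -> set_submodular (f \o phi).
Proof. by move=> f_sub A B C /morph_setU_subset AB /=; rewrite !phiU f_sub. Qed.

End UnionMorphisms.

Lemma reach_setU (V : finType) (g : {set V * V}) :
  {morph reach_set g : A B / A :|: B}.
Proof.
move=> A B; apply/setP => v; rewrite !inE; apply/existsP/orP.
- by case=> a /andP[/setUP[] Aa av]; [left | right]; apply/existsP; exists a; rewrite Aa.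
- by case=> /existsP[a /andP[Aa av]]; exists a; rewrite inE Aa ?orbT.
Qed.

Lemma setId_setU (T : finType) (P : pred T) :
  {morph (fun A : {set T} => [set x in A | P x]) : A B / A :|: B}.
Proof. by move=> A B /=; rewrite !(setIdE _ P) setIUl. Qed.

Lemma realization_prob_ge0 (R : realFieldType) (V : finType) (E g : {set V * V})
    (w : V -> V -> R) :
  (forall u v, (u, v) \in E -> 0 <= w u v <= 1) -> 0 <= realization_prob E w g.
Proof.
move=> w01; apply: prodr_ge0 => -[u v] /w01 /andP[w_ge0 w_le1] /=.
by case: ifP; rewrite ?subr_ge0.
Qed.

Section Diffusion.
Variables (R : realFieldType) (V : finType) (E : {set V * V}) (nT nA : nat).
Variables (w : 'I_nT -> V -> V -> R) (L : V -> 'I_nA) (q : 'I_nT -> 'I_nA -> R).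
Variable Ti : V -> {set 'I_nT}.
Hypothesis w01 : forall j u v, (u, v) \in E -> 0 <= w j u v <= 1.
Hypothesis q_ge0 : forall j k, 0 <= q j k.

Let covered (j : 'I_nT) (g : {set V * V}) (S : {set V}) :=
  reach_set g [set x in S | j \in Ti x].

Let covered_setU j g : {morph covered j g : A B / A :|: B}.
Proof. by move=> A B; rewrite /covered setId_setU reach_setU. Qed.

Let mt_diffusionE :
  mt_diffusion E w L q Ti = fun S => (nT%:R)^-1 * \sum_(j < nT)
    \sum_(g : {set V * V} | g \subset E)
      realization_prob E (w j) g * (weight (fun v => q j (L v)) \o covered j g) S.
Proof. by []. Qed.

Lemma mt_diffusion_monotone : set_monotone (mt_diffusion E w L q Ti).
Proof.
rewrite mt_diffusionE; apply: set_monotone_scale; first by rewrite invr_ge0.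
apply: set_monotone_sum => j; apply: set_monotone_sum => g.
apply: set_monotone_scale; first exact: realization_prob_ge0 (w01 j).
by apply: set_monotone_comp; [apply: covered_setU | apply: weight_monotone].
Qed.

Lemma mt_diffusion_submodular : set_submodular (mt_diffusion E w L q Ti).
Proof.
rewrite mt_diffusionE; apply: set_submodular_scale; first by rewrite invr_ge0.
apply: set_submodular_sum => j; apply: set_submodular_sum => g.
apply: set_submodular_scale; first exact: realization_prob_ge0 (w01 j).
by apply: set_submodular_comp; [apply: covered_setU | apply: weight_submodular].
Qed.

End Diffusion.

Theorem theorem2 (R : realFieldType) (V : finType) (E : {set V * V})
  (nT nA : nat) (w : 'I_nT -> V -> V -> R)
  (hw : forall j u v, (u, v) \in E -> 0 <= w j u v <= 1)
  (L : V -> 'I_nA) (q : 'I_nT -> 'I_nA -> R)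
  (hq : forall j k, 0 <= q j k)
  (VR : {set V}) (Ti : V -> {set 'I_nT}) :
  forall (S1 S2 : {set V}) (u : V),
    S1 \subset S2 -> S2 \subset VR -> u \in VR :\: S2 ->
    mt_diffusion E w L q Ti S1 <= mt_diffusion E w L q Ti S2 /\
    mt_diffusion E w L q Ti (u |: S1) - mt_diffusion E w L q Ti S1 >=
    mt_diffusion E w L q Ti (u |: S2) - mt_diffusion E w L q Ti S2.
Proof.
move=> S1 S2 u S12 _ _; split.
- exact: mt_diffusion_monotone.
- exact: mt_diffusion_submodular.
Qed.
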